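(* Equip $S^2\subset\mathbb{R}^3$ with the topological quandle operation $x*y=2(x\cdot y)y-x$ and $\mathbb{RP}^2$ with the induced topological quandle operation $[x]*[y]=[2(x\cdot y)y-x]$. Let $\mathbb{Z}_2$ carry the discrete topology and trivial quandle structure ($T=1$). Then $H^2_Q(\mathbb{RP}^2,\mathbb{Z}_2)\neq0$, while $H^2_C(\mathbb{RP}^2,\mathbb{Z}_2)=0$.
   Context: For a quandle $X$ and abelian group $A$ (with $T=1$): $H^2_Q(X,A)$ is the (discrete) quandle cohomology, i.e. the group of all maps $\phi:X\times X\to A$ with $\phi(x,x)=0$ and $\phi(x_1,x_2)+\phi(x_1*x_2,x_3)=\phi(x_1,x_3)+\phi(x_1*x_3,x_2*x_3)$, modulo the maps $(x,y)\mapsto f(x)-f(x*y)$ for arbitrary $f:X\to A$. $H^2_C(X,A)$ is defined the same way but with all maps $\phi$ and $f$ required to be continuous ($X\times X$ with product topology). *)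

From Stdlib Require Import Reals.
Open Scope R_scope.

Definition pt : Type := (R * R * R)%type.

Definition dot (u v : pt) : R :=
  let '(a1, a2, a3) := u in let '(b1, b2, b3) := v in a1*b1 + a2*b2 + a3*b3.

Definition neg (u : pt) : pt := let '(a1, a2, a3) := u in (- a1, - a2, - a3).

Definition dist2 (u v : pt) : R :=
  let '(a1, a2, a3) := u in let '(b1, b2, b3) := v in
  (a1-b1)*(a1-b1) + (a2-b2)*(a2-b2) + (a3-b3)*(a3-b3).

Definition S2 (u : pt) : Prop := dot u u = 1.

Definition qop (x y : pt) : pt :=
  let c := 2 * dot x y in
  let '(a1, a2, a3) := x in let '(b1, b2, b3) := y in
  (c*b1 - a1, c*b2 - a2, c*b3 - a3).

(* A map RP^2 -> Z_2 is encoded as a map on S^2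
   invariant under antipody; a map RP^2 x RP^2 -> Z_2 as a map on S^2 x S^2
   invariant under antipody in each variable.  Z_2 = bool, addition = xorb
   (so subtraction is also xorb). *)
Definition RP2fun1 (f : pt -> bool) : Prop :=
  forall x, S2 x -> f (neg x) = f x.

Definition RP2fun2 (phi : pt -> pt -> bool) : Prop :=
  forall x y, S2 x -> S2 y -> phi (neg x) y = phi x y /\ phi x (neg y) = phi x y.

Definition is_cocycle (phi : pt -> pt -> bool) : Prop :=
  RP2fun2 phi /\
  (forall x, S2 x -> phi x x = false) /\
  (forall x1 x2 x3, S2 x1 -> S2 x2 -> S2 x3 ->
     xorb (phi x1 x2) (phi (qop x1 x2) x3) =
     xorb (phi x1 x3) (phi (qop x1 x3) (qop x2 x3))).

Definition coboundary_of (f : pt -> bool) (phi : pt -> pt -> bool) : Prop :=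
  forall x y, S2 x -> S2 y -> phi x y = xorb (f x) (f (qop x y)).

(* Continuity into discrete Z_2 (= local constancy).  Since S^2 -> RP^2 and
   S^2 x S^2 -> RP^2 x RP^2 are (open) quotient maps, continuity on RP^2 (resp.
   RP^2 x RP^2) is continuity of the lift on S^2 (resp. S^2 x S^2). *)
Definition cont1 (f : pt -> bool) : Prop :=
  forall x, S2 x -> exists eps, 0 < eps /\
    forall x', S2 x' -> dist2 x x' < eps -> f x' = f x.

Definition cont2 (phi : pt -> pt -> bool) : Prop :=
  forall x y, S2 x -> S2 y -> exists eps, 0 < eps /\
    forall x' y', S2 x' -> S2 y' -> dist2 x x' < eps -> dist2 y y' < eps ->
      phi x' y' = phi x y.

Definition H2Q_nonzero : Prop :=
  exists phi, is_cocycle phi /\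
    ~ (exists f, RP2fun1 f /\ coboundary_of f phi).

Definition H2C_zero : Prop :=
  forall phi, is_cocycle phi -> cont2 phi ->
    exists f, RP2fun1 f /\ cont1 f /\ coboundary_of f phi.

(* A continuous 2-cocycle phi : RP^2 x RP^2 -> Z_2 is, for fixed x, a locally
   constant function of y on the connected sphere, so phi(x,y) = phi(x,x) = 0
   and phi is the coboundary of the zero map.  Discontinuous cocycles survive:
   the coboundary of an antipodally odd map f : S^2 -> Z_2 (e.g. the sign of
   the first nonzero coordinate) is antipodally even in both variables, hence
   a cocycle on RP^2.  It is not the coboundary of an even map g, because for
   y orthogonal to x we have x * y = -x, where the coboundary of f is 1 and
   that of g is 0. *)

From Pilot Require Import Defs.
From Stdlib Require Import Reals Lra Psatz.
Open Scope R_scope.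
(* Stdlib's Reals also defines [neg] and [cont1]. *)
Local Notation neg := Pilot.Defs.neg.
Local Notation cont1 := Pilot.Defs.cont1.

Lemma pt_eq (a1 a2 a3 b1 b2 b3 : R) :
  a1 = b1 -> a2 = b2 -> a3 = b3 -> (a1, a2, a3) = (b1, b2, b3).
Proof. now intros -> -> ->. Qed.

Ltac destruct_pts := repeat match goal with
  | p : pt |- _ => let a := fresh "a" in let b := fresh "b" in let c := fresh "c" in
                   destruct p as [[a b] c]
  end.

Definition scale_sub (c : R) (y x : pt) : pt :=
  let '(a1, a2, a3) := x in let '(b1, b2, b3) := y in
  (c*b1 - a1, c*b2 - a2, c*b3 - a3).

Lemma qopE (x y : pt) : qop x y = scale_sub (2 * dot x y) y x.
Proof. now destruct_pts. Qed.

Lemma S2_neg (x : pt) : S2 x -> S2 (neg x).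
Proof. destruct_pts; unfold S2, neg, dot; lra. Qed.

Lemma dot_negr (x y : pt) : dot x (neg y) = - dot x y.
Proof. destruct_pts; unfold neg, dot; ring. Qed.

Lemma qop_negl (x y : pt) : qop (neg x) y = neg (qop x y).
Proof. destruct_pts; apply pt_eq; simpl; ring. Qed.

Lemma qop_negr (x y : pt) : qop x (neg y) = qop x y.
Proof. destruct_pts; apply pt_eq; simpl; ring. Qed.

Lemma qopxx (x : pt) : S2 x -> qop x x = x.
Proof. rewrite qopE; unfold S2; intros ->; destruct_pts; apply pt_eq; ring. Qed.

Lemma dot_qop (u v w : pt) : S2 w -> dot (qop u w) (qop v w) = dot u v.
Proof.
  unfold S2; intros Hw.
  transitivity (dot u v + 4 * dot u w * dot v w * (dot w w - 1));
    [destruct_pts; simpl; ring | rewrite Hw; ring].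
Qed.

Lemma S2_qop (x y : pt) : S2 x -> S2 y -> S2 (qop x y).
Proof. unfold S2; intros Hx Hy; rewrite dot_qop; assumption. Qed.

Lemma qop_distr (x1 x2 x3 : pt) :
  S2 x3 -> qop (qop x1 x2) x3 = qop (qop x1 x3) (qop x2 x3).
Proof.
  intros H3; rewrite (qopE (qop x1 x3)), dot_qop by exact H3.
  destruct_pts; apply pt_eq; simpl; ring.
Qed.

Definition antipodal_odd (f : pt -> bool) : Prop :=
  forall x, S2 x -> f (neg x) = negb (f x).

Definition coboundary (f : pt -> bool) (x y : pt) : bool := xorb (f x) (f (qop x y)).

Lemma coboundary_is_cocycle (f : pt -> bool) :
  antipodal_odd f -> is_cocycle (coboundary f).
Proof.
  intros Hf; unfold coboundary; split; [|split].
  - intros x y Hx Hy; split.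
    + rewrite qop_negl, !Hf by auto using S2_qop.
      now destruct (f x), (f (qop x y)).
    + now rewrite qop_negr.
  - intros x Hx; rewrite qopxx by exact Hx; apply Bool.xorb_nilpotent.
  - intros x1 x2 x3 _ _ H3; rewrite qop_distr by exact H3.
    now destruct (f x1), (f (qop x1 x2)), (f (qop x1 x3)),
      (f (qop (qop x1 x3) (qop x2 x3))).
Qed.

Lemma coboundary_not_RP2_coboundary (f : pt -> bool) :
  antipodal_odd f -> ~ (exists g, RP2fun1 g /\ coboundary_of g (coboundary f)).
Proof.
  intros Hf [g [Hg Hcb]].
  set (x := (1, 0, 0) : pt); set (y := (0, 1, 0) : pt).
  assert (Sx : S2 x) by (unfold S2, x, dot; ring).
  assert (Sy : S2 y) by (unfold S2, y, dot; ring).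
  assert (Exy : qop x y = neg x) by (apply pt_eq; unfold x, y; simpl; ring).
  specialize (Hcb x y Sx Sy); unfold coboundary in Hcb.
  rewrite Exy, Hf, Hg in Hcb by exact Sx.
  now destruct (f x), (g x).
Qed.

Definition lex_pos (x : pt) : bool :=
  let '(a, b, c) := x in
  if Rlt_dec 0 a then true else if Req_EM_T a 0 then
    (if Rlt_dec 0 b then true else if Req_EM_T b 0 then
      (if Rlt_dec 0 c then true else false) else false) else false.

Lemma lex_pos_odd : antipodal_odd lex_pos.
Proof.
  intros x; destruct_pts; unfold S2, dot, neg, lex_pos; intros H.
  repeat destruct Rlt_dec; repeat destruct Req_EM_T; simpl; try reflexivity; nra.
Qed.

Lemma H2Q : H2Q_nonzero.
Proof.
  exists (coboundary lex_pos); split.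
  - exact (coboundary_is_cocycle _ lex_pos_odd).
  - exact (coboundary_not_RP2_coboundary _ lex_pos_odd).
Qed.

Definition path_cont (g : R -> pt) : Prop :=
  forall t eps, 0 < eps -> exists d, 0 < d /\
    forall t', Rabs (t' - t) < d -> dist2 (g t) (g t') < eps.

Lemma continuity_pt_ball (f : R -> R) (t : R) :
  continuity_pt f t -> forall e, 0 < e -> exists d, 0 < d /\
    forall t', Rabs (t' - t) < d -> Rabs (f t' - f t) < e.
Proof.
  intros C e He; destruct (C e He) as [d [Hd Hf]]; exists d; split; [exact Hd|].
  intros t' Ht'; destruct (Req_dec t' t) as [->|Hne].
  - now rewrite Rminus_diag, Rabs_R0.
  - apply (Hf t'); split; [split; [exact I | auto] | exact Ht'].
Qed.

Lemma continuity_pt_locally_const (f : R -> R) (t : R) :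
  (exists d, 0 < d /\ forall t', Rabs (t' - t) < d -> f t' = f t) ->
  continuity_pt f t.
Proof.
  intros [d [Hd Hf]] e He; exists d; split; [exact Hd|].
  intros t' [_ Ht']; simpl; unfold R_dist in *.
  now rewrite Hf, Rminus_diag, Rabs_R0.
Qed.

Lemma sqr_lt_of_abs_lt (d e : R) : Rabs d < e -> e <= 1 -> d * d < e.
Proof.
  intros Hd He; pose proof (Rabs_pos d).
  assert (d * d = Rabs d * Rabs d) by (rewrite <- Rabs_mult, Rabs_right; nra).
  nra.
Qed.

Lemma path_cont_coords (g1 g2 g3 : R -> R) :
  (forall t, continuity_pt g1 t) -> (forall t, continuity_pt g2 t) ->
  (forall t, continuity_pt g3 t) -> path_cont (fun t => (g1 t, g2 t, g3 t)).
Proof.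
  intros C1 C2 C3 t eps Heps.
  set (e := Rmin 1 (eps / 3)).
  assert (e0 : 0 < e) by (apply Rmin_glb_lt; lra).
  assert (e1 : e <= 1) by apply Rmin_l.
  assert (e2 : e <= eps / 3) by apply Rmin_r.
  destruct (continuity_pt_ball _ _ (C1 t) e e0) as [d1 [D1 B1]].
  destruct (continuity_pt_ball _ _ (C2 t) e e0) as [d2 [D2 B2]].
  destruct (continuity_pt_ball _ _ (C3 t) e e0) as [d3 [D3 B3]].
  exists (Rmin d1 (Rmin d2 d3)); split; [repeat apply Rmin_glb_lt; lra|].
  intros t' Ht'; simpl.
  pose proof (Rmin_l d1 (Rmin d2 d3)); pose proof (Rmin_r d1 (Rmin d2 d3)).
  pose proof (Rmin_l d2 d3); pose proof (Rmin_r d2 d3).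
  assert (Q1 := sqr_lt_of_abs_lt _ _ (B1 t' ltac:(lra)) e1).
  assert (Q2 := sqr_lt_of_abs_lt _ _ (B2 t' ltac:(lra)) e1).
  assert (Q3 := sqr_lt_of_abs_lt _ _ (B3 t' ltac:(lra)) e1).
  nra.
Qed.

Lemma locally_const_along_path (h : pt -> bool) (g : R -> pt) :
  cont1 h -> path_cont g -> (forall s, S2 (g s)) -> h (g 1) = h (g 0).
Proof.
  intros Hh Hg gS.
  (* H is locally constant, hence continuous, so by the IVT it cannot jump from 0 to 1. *)
  set (H := fun s => if Bool.eqb (h (g s)) (h (g 0)) then 0 else 1).
  assert (HC : continuity H).
  { intros t; apply continuity_pt_locally_const.
    destruct (Hh (g t) (gS t)) as [e [He Hloc]].
    destruct (Hg t e He) as [d [Hd Hball]].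
    exists d; split; [exact Hd|]; intros t' Ht'.
    unfold H; rewrite (Hloc (g t') (gS t') (Hball t' Ht')); reflexivity. }
  destruct (Bool.eqb (h (g 1)) (h (g 0))) eqn:E; [exact (proj1 (Bool.eqb_true_iff _ _) E)|].
  exfalso.
  assert (H0 : H 0 = 0) by (unfold H; rewrite Bool.eqb_reflx; reflexivity).
  assert (H1 : H 1 = 1) by (unfold H; rewrite E; reflexivity).
  destruct (IVT (fun s => H s - 1/2) 0 1) as [z [_ Hz]]; try lra.
  - apply continuity_minus; [exact HC | apply continuity_const; intros ? ?; reflexivity].
  - revert Hz; unfold H; destruct (Bool.eqb (h (g z)) (h (g 0))); lra.
Qed.

Definition normalize (u : pt) : pt :=
  let '(a1, a2, a3) := u in
  let c := / sqrt (dot u u) in (c * a1, c * a2, c * a3).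

Lemma S2_normalize (u : pt) : 0 < dot u u -> S2 (normalize u).
Proof.
  destruct_pts; unfold S2, normalize; intros Hu.
  set (n := dot (a, b, c) (a, b, c)) in *.
  pose proof (sqrt_lt_R0 _ Hu); pose proof (sqrt_sqrt n (Rlt_le _ _ Hu)).
  simpl; transitivity ((a * a + b * b + c * c) / (sqrt n * sqrt n)).
  - field; lra.
  - change (a * a + b * b + c * c) with n; rewrite H0; field; lra.
Qed.

Lemma normalize_S2 (u : pt) : S2 u -> normalize u = u.
Proof.
  unfold S2; intros Hu; unfold normalize; destruct_pts.
  rewrite Hu, sqrt_1, Rinv_1; apply pt_eq; ring.
Qed.

Lemma path_cont_normalize (v1 v2 v3 : R -> R) :
  (forall t, continuity_pt v1 t) -> (forall t, continuity_pt v2 t) ->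
  (forall t, continuity_pt v3 t) ->
  (forall t, 0 < dot (v1 t, v2 t, v3 t) (v1 t, v2 t, v3 t)) ->
  path_cont (fun t => normalize (v1 t, v2 t, v3 t)).
Proof.
  intros C1 C2 C3 Hpos.
  set (c := fun t => / sqrt (dot (v1 t, v2 t, v3 t) (v1 t, v2 t, v3 t))).
  assert (Cc : forall t, continuity_pt c t).
  { intros t; apply (continuity_pt_inv (fun t => sqrt (dot _ _)));
      [| apply Rgt_not_eq, sqrt_lt_R0, Hpos].
    apply (continuity_pt_comp (fun t => dot (v1 t, v2 t, v3 t) (v1 t, v2 t, v3 t)) sqrt);
      [simpl; reg; auto | apply continuity_pt_sqrt, Rlt_le, Hpos]. }
  apply (path_cont_coords (fun t => c t * v1 t) (fun t => c t * v2 t) (fun t => c t * v3 t));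
    intros t; apply (continuity_pt_mult c); auto.
Qed.

Definition segment (x y : pt) (s : R) : pt :=
  let '(a1, a2, a3) := x in let '(b1, b2, b3) := y in
  ((1-s)*a1 + s*b1, (1-s)*a2 + s*b2, (1-s)*a3 + s*b3).

Lemma dot_segment (x y : pt) (s : R) : S2 x -> S2 y ->
  dot (segment x y s) (segment x y s) = 1 - 2 * (s * (1 - s)) * (1 - dot x y).
Proof.
  unfold S2; intros Hx Hy.
  transitivity ((1-s)*(1-s) * dot x x + s*s * dot y y + 2*s*(1-s) * dot x y);
    [destruct_pts; simpl; ring | rewrite Hx, Hy; ring].
Qed.

Lemma dot_le_1 (x y : pt) : S2 x -> S2 y -> dot x y <= 1.
Proof.
  unfold S2; intros Hx Hy.
  assert (0 <= dist2 x y)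
    by (destruct_pts; simpl; repeat apply Rplus_le_le_0_compat; apply Rle_0_sqr).
  assert (dist2 x y = dot x x + dot y y - 2 * dot x y) by (destruct_pts; simpl; ring).
  lra.
Qed.

Lemma segment_nonzero (x y : pt) (s : R) : S2 x -> S2 y -> 0 <= dot x y ->
  0 < dot (segment x y s) (segment x y s).
Proof.
  intros Hx Hy Hd; rewrite dot_segment by assumption.
  pose proof (dot_le_1 x y Hx Hy).
  assert (s * (1 - s) <= 1/4) by (pose proof (Rle_0_sqr (s - 1/2)); unfold Rsqr in *; lra).
  destruct (Rle_dec 0 (s * (1 - s))); nra.
Qed.

Lemma cont1_hemisphere (h : pt -> bool) (x y : pt) :
  cont1 h -> S2 x -> S2 y -> 0 <= dot x y -> h y = h x.
Proof.
  intros Hh Hx Hy Hd.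
  set (g := fun s => normalize (segment x y s)).
  assert (gS : forall s, S2 (g s)) by (intros s; apply S2_normalize, segment_nonzero; auto).
  assert (g0 : g 0 = x).
  { unfold g; rewrite <- (normalize_S2 x Hx) at 2; f_equal.
    destruct_pts; apply pt_eq; ring. }
  assert (g1 : g 1 = y).
  { unfold g; rewrite <- (normalize_S2 y Hy) at 2; f_equal.
    destruct_pts; apply pt_eq; ring. }
  rewrite <- g0, <- g1; apply (locally_const_along_path h g Hh); [|exact gS].
  unfold g; clear g gS g0 g1.
  pose proof (fun s => segment_nonzero x y s Hx Hy Hd) as Hpos.
  destruct_pts; simpl in Hpos |- *.
  apply path_cont_normalize; [intros t; reg .. | exact Hpos].
Qed.

Lemma cont2_cont1_r (phi : pt -> pt -> bool) (x : pt) :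
  S2 x -> cont2 phi -> cont1 (phi x).
Proof.
  intros Hx Hc y Hy; destruct (Hc x y Hx Hy) as [e [He Hloc]].
  exists e; split; [exact He|]; intros y' Hy' Hyy'; apply Hloc; auto.
  unfold dist2; destruct_pts; lra.
Qed.

Lemma continuous_normalized_vanishes (phi : pt -> pt -> bool) :
  RP2fun2 phi -> (forall x, S2 x -> phi x x = false) -> cont2 phi ->
  forall x y, S2 x -> S2 y -> phi x y = false.
Proof.
  intros HR Hid Hc x y Hx Hy.
  pose proof (cont2_cont1_r phi x Hx Hc) as Hcx.
  rewrite <- (Hid x Hx).
  destruct (Rle_dec 0 (dot x y)) as [Hd|Hd].
  - exact (cont1_hemisphere _ x y Hcx Hx Hy Hd).
  - rewrite <- (proj2 (HR x y Hx Hy)).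
    apply (cont1_hemisphere _ x (neg y) Hcx Hx (S2_neg y Hy)).
    rewrite dot_negr; lra.
Qed.

Lemma H2C : H2C_zero.
Proof.
  intros phi [HR [Hid _]] Hc; exists (fun _ => false); split; [|split].
  - intros x _; reflexivity.
  - intros x _; exists 1; split; [lra | reflexivity].
  - intros x y Hx Hy; exact (continuous_normalized_vanishes phi HR Hid Hc x y Hx Hy).
Qed.

Theorem mainTheorem9 : H2Q_nonzero /\ H2C_zero.
Proof. exact (conj H2Q H2C). Qed.
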